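(* Let $q$ be a prime power, $m$ and $g$ positive integers, and let $p_1(x),\dots,p_g(x)\in\mathbb{F}_q[x]$ be polynomials of degree $m$ with $\gcd(p_i,p_j)=1$ for all $1\le i\ne j\le g$. For $1\le i\le g$ let $V_i=\{f(x)/p_i(x):\ f\in\mathbb{F}_q[x],\ \deg f\le m-1\}$. Let $Q(x)\in\mathbb{F}_q[x]$ be an irreducible polynomial coprime with every $p_i(x)$, and for a rational function $u\in V_i$ let $u(Q)$ denote the residue class of $u$ in $\mathbb{F}_q[x]/(Q(x))\cong\mathbb{F}_{q^{\deg Q}}$. Let $T\subseteq\{1,\dots,g\}$ with $|T|\le \deg(Q)/m$. If $g_i\in V_i$ ($i\in T$) satisfy $\sum_{i\in T} g_i(Q)=0$, then $g_i=0$ for all $i\in T$.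
   Context: The residue class $u(Q)$ of $u=f/p_i$ is well defined since $p_i$ is invertible modulo the irreducible polynomial $Q$ coprime to it. *)

From HB Require Import structures.
From mathcomp Require Import all_boot all_order all_algebra.
Set Implicit Arguments. Unset Strict Implicit. Unset Printing Implicit Defensive.
Import GRing.Theory.
Local Open Scope ring_scope.

(* The monic associate of Q; it generates the same ideal (Q) of F[x]. *)
Definition monic_assoc (F : fieldType) (Q : {poly F}) : {poly F} :=
  (lead_coef Q)^-1 *: Q.

(* Residue class u(Q) in F[x]/(Q) of the rational function u = f / p,
   computed as [f] * [p]^-1 in the quotient ring {poly %/ monic_assoc Q}. *)
Definition resid (F : fieldType) (Q p f : {poly F}) : {poly %/ monic_assoc Q} :=
  in_qpoly (monic_assoc Q) f / in_qpoly (monic_assoc Q) p.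

(* Clearing denominators, sum_(i in T) f_i / p_i = N / prod_(i in T) p_i with
   N = sum_(i in T) f_i * prod_(j in T, j != i) p_j.  The hypothesis says that
   Q divides N, while deg N < m |T| <= deg Q; hence N = 0.  Reducing N modulo
   p_i, which is coprime to the other p_j, then gives p_i | f_i, and
   deg f_i < deg p_i forces f_i = 0. *)
From HB Require Import structures.
From mathcomp Require Import all_boot all_order all_algebra.
From mathcomp Require Import zify.

Set Implicit Arguments.
Unset Strict Implicit.
Unset Printing Implicit Defensive.

Import GRing.Theory Num.Theory.
Local Open Scope ring_scope.

Lemma dvdp_sumr (R : idomainType) (I : Type) (r : seq I) (P : pred I)
    (F : I -> {poly R}) (d : {poly R}) :
  (forall i, P i -> d %| F i) -> d %| \sum_(i <- r | P i) F i.
Proof. by move=> dF; elim/big_ind: _; [exact: dvdp0 | exact: dvdp_add | exact: dF]. Qed.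

Section PolyProducts.
Variables (R : idomainType) (I : finType) (P : pred I) (p : I -> {poly R}).

Lemma dvdp_prod i : P i -> p i %| \prod_(j | P j) p j.
Proof. by move=> Pi; rewrite (bigD1 i) //= dvdp_mulIl. Qed.

Lemma coprimep_prodr q :
  (forall j, P j -> coprimep q (p j)) -> coprimep q (\prod_(j | P j) p j).
Proof.
move=> cop; elim/big_ind: _ => [|x y cx cy|]; last exact: cop.
  exact: coprimep1.
by rewrite coprimepMr cx cy.
Qed.

Lemma size_prod_leq_uniform n :
  (forall j, P j -> (size (p j) <= n.+1)%N) ->
  (size (\prod_(j | P j) p j)%R <= n * #|P| + 1)%N.
Proof.
move=> size_p; apply: leq_trans (size_poly_prod_leq _ _) _.
have : (\sum_(j | P j) size (p j) <= \sum_(j | P j) n.+1)%N.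
  by apply: leq_sum => j /size_p.
rewrite sum_nat_const mulnC; lia.
Qed.

End PolyProducts.

Section CommonNumerator.
Variables (R : idomainType) (I : finType) (T : {set I}) (p f : I -> {poly R}).

Definition common_numer : {poly R} :=
  \sum_(i in T) f i * \prod_(j in T | j != i) p j.

Lemma size_common_numer m :
    {in T, forall i, size (p i) = m.+1} -> {in T, forall i, (size (f i) <= m)%N} ->
  (size common_numer <= m * #|T|)%N.
Proof.
move=> size_p size_f; elim/big_ind: common_numer => [||i iT].
- by rewrite size_poly0.
- by move=> x y sx sy; apply: leq_trans (size_polyD _ _) _; rewrite geq_max sx sy.
have card_Ti : #|[pred j | (j \in T) && (j != i)]| = #|T|.-1.
  by rewrite (cardD1 i T) iT; apply: eq_card => j; rewrite !inE andbC.
have size_prod : (size (\prod_(j in T | j != i) p j)%R <= m * #|T|.-1 + 1)%N.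
  by rewrite -card_Ti; apply: size_prod_leq_uniform => j /andP[jT _]; rewrite size_p.
apply: leq_trans (size_mul_leq _ _) _.
have := size_f i iT; have : (0 < #|T|)%N by apply/card_gt0P; exists i.
move: size_prod; case: #|T| => // k; rewrite mulnS; lia.
Qed.

Lemma common_numer_eq0 :
    {in T &, forall i j, i != j -> coprimep (p i) (p j)} ->
    {in T, forall i, (size (f i) < size (p i))%N} ->
  common_numer = 0 -> {in T, forall i, f i = 0}.
Proof.
move=> cop small numer0 i iT.
have p_dvd_fi : p i %| f i * \prod_(j in T | j != i) p j.
  have : p i %| common_numer by rewrite numer0 dvdp0.
  rewrite /common_numer (bigD1 i iT) /= addrC dvdp_addr //.
  apply: dvdp_sumr => k /andP[kT ki]; apply: dvdp_mull; apply: dvdp_prod.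
  by rewrite iT eq_sym.
rewrite Gauss_dvdpl in p_dvd_fi; last first.
  by apply: coprimep_prodr => j /andP[jT ji]; apply: cop; rewrite // eq_sym.
apply/eqP/contraT => fi_nz.
by rewrite (gtNdvdp fi_nz (small i iT)) in p_dvd_fi.
Qed.

End CommonNumerator.

Section Residues.
Variables (F : fieldType) (Q : {poly F}).
Hypothesis Q_nonconst : (1 < size Q)%N.
Local Notation h := (monic_assoc Q).

Lemma monic_assoc_monic : h \is monic.
Proof.
have Q_nz : Q != 0 by rewrite -size_poly_gt0 ltnW.
by rewrite monicE lead_coefZ mulVf ?lead_coef_eq0.
Qed.

Lemma lead_coef_inv_neq0 : (lead_coef Q)^-1 != 0.
Proof. by rewrite invr_eq0 lead_coef_eq0 -size_poly_gt0 ltnW. Qed.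

Lemma mk_monic_assoc : mk_monic h = h.
Proof.
by rewrite /mk_monic size_scale ?lead_coef_inv_neq0 // Q_nonconst monic_assoc_monic.
Qed.

Lemma in_qpoly_monic_assocE x : in_qpoly h x = x %% h :> {poly F}.
Proof.
by rewrite /= mk_monic_assoc -Pdiv.IdomainMonic.modpE // monic_assoc_monic.
Qed.

Lemma in_qpoly_monic_assoc_eq0 x : (in_qpoly h x == 0) = (Q %| x).
Proof.
have -> : (in_qpoly h x == 0) = (x %% h == 0).
  by rewrite -in_qpoly_monic_assocE; apply/eqP/eqP => [->|e] //; apply: val_inj; exact: e.
by rewrite (sameP eqP (modp_eq0P _ _)) dvdpZl // lead_coef_inv_neq0.
Qed.

Lemma in_qpoly_monic_assoc_unit x :
  coprimep Q x -> in_qpoly h x \is a GRing.unit.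
Proof.
move=> cop; rewrite unfold_in /= mk_monic_assoc.
rewrite -Pdiv.IdomainMonic.modpE ?monic_assoc_monic // coprimep_modr.
by rewrite coprimepZl // lead_coef_inv_neq0.
Qed.

Lemma resid_sum_eq0_dvdp (I : finType) (T : {set I}) (p f : I -> {poly F}) :
    {in T, forall i, coprimep Q (p i)} ->
    \sum_(i in T) resid Q (p i) (f i) = 0 -> Q %| common_numer T p f.
Proof.
move=> cop sum0; rewrite -in_qpoly_monic_assoc_eq0 /common_numer rmorph_sum /=.
rewrite (eq_bigr (fun i => resid Q (p i) (f i) * in_qpoly h (\prod_(j in T) p j))).
  by rewrite -mulr_suml sum0 mul0r.
move=> i iT; rewrite (bigD1 i iT) /= !rmorphM /resid mulrA divrK //.
exact: in_qpoly_monic_assoc_unit (cop i iT).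
Qed.

End Residues.

Theorem lemma3p1 (F : finFieldType) (m g : nat) (p : 'I_g -> {poly F})
    (Q : {poly F}) (T : {set 'I_g}) (f : 'I_g -> {poly F}) :
  (0 < m)%N -> (0 < g)%N ->
  (forall i, size (p i) = m.+1) ->
  (forall i j, i != j -> coprimep (p i) (p j)) ->
  irreducible_poly Q ->
  (forall i, coprimep Q (p i)) ->
  ((#|T|)%:R <= ((size Q).-1)%:R / m%:R :> rat) ->
  (forall i, i \in T -> (size (f i) <= m)%N) ->
  \sum_(i in T) resid Q (p i) (f i) = 0 ->
  forall i, i \in T -> f i = 0.
Proof.
move=> m_gt0 _ size_p cop_p Q_irr cop_Q card_T size_f sum0.
have Q_nonconst : (1 < size Q)%N by case: Q_irr.
have numer_small : (size (common_numer T p f) < size Q)%N.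
  have card_T_lt : (m * #|T| < size Q)%N.
    by move: card_T; rewrite ler_pdivlMr ?ltr0n // -natrM ler_nat; lia.
  apply: leq_ltn_trans card_T_lt.
  by apply: size_common_numer => i iT; [exact: size_p | exact: size_f].
have numer0 : common_numer T p f = 0.
  apply/eqP/contraT => numer_nz.
  have : Q %| common_numer T p f by apply: resid_sum_eq0_dvdp => // i _.
  by rewrite (gtNdvdp numer_nz numer_small).
apply: common_numer_eq0 numer0 => [i j _ _ /cop_p // | i iT].
by rewrite size_p ltnS size_f.
Qed.
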